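(* Let $\mathbb{F}\in\{\mathbb{R},\mathbb{C}\}$, let $\nu$ be a vector norm on $\mathbb{F}^n$, and let $A\in\mathbb{F}^{n\times n}$ be nonexpansive with respect to $\nu$. Let $H=\mathcal{R}(I-A)$ and $K=\mathcal{N}(I-A)$. Suppose that $\nu(y+z)=\nu(y)+\nu(z)$ for all $y\in H$, $z\in K$. Then the following are equivalent: (i) $A$ is $l$-paracontracting with respect to $\nu$; (ii) $A$ is paracontracting with respect to $\nu$; (iii) $A$ is an $H$-contractor with respect to $\nu$.
   Context: $\mathcal{R}$ denotes range and $\mathcal{N}$ denotes nullspace. The operator norm is $\nu^0(A)=\sup_{x\neq 0}\nu(Ax)/\nu(x)$; $A$ is nonexpansive with respect to $\nu$ if $\nu^0(A)\le 1$. For a subspace $H$ invariant under $A$, $\nu^0_H(A)=\sup_{0\neq x\in H}\nu(Ax)/\nu(x)$. $A$ is paracontracting with respect to $\nu$ if $\nu(Ax)<\nu(x)$ whenever $Ax\ne x$. $A$ is $l$-paracontracting with respect to $\nu$ if there is $\gamma>0$ such that $\nu(Ax)\le \nu(x)-\gamma\,\nu(Ax-x)$ for all $x\in\mathbb{F}^n$. $A$ is an $H$-contractor with respect to $\nu$ if $A$ is nonexpansive, $H$ is invariant under $A$, and $\nu^0_H(A)<1$. *)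

From mathcomp Require Import all_boot all_order all_algebra.
From mathcomp Require Import reals.
From mathcomp Require Import complex.
Set Implicit Arguments. Unset Strict Implicit. Unset Printing Implicit Defensive.
Import Order.TTheory GRing.Theory Num.Theory.
Local Open Scope ring_scope.

Section Defs.
Variables (F : numFieldType) (n : nat).

(* A vector norm on F^n (column vectors); values are nonnegative, hence real. *)
Definition is_vector_norm (nu : 'cV[F]_n -> F) : Prop :=
  [/\ (forall x, 0 <= nu x),
      (forall x, nu x = 0 -> x = 0),
      (forall (a : F) x, nu (a *: x) = `|a| * nu x) &
      (forall x y, nu (x + y) <= nu x + nu y)].

Definition range_mx (M : 'M[F]_n) : 'cV[F]_n -> Prop :=
  fun y => exists x, y = M *m x.
Definition null_mx (M : 'M[F]_n) : 'cV[F]_n -> Prop :=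
  fun z => M *m z = 0.

Definition invariant (A : 'M[F]_n) (H : 'cV[F]_n -> Prop) : Prop :=
  forall x, H x -> H (A *m x).

(* s is the operator (semi)norm nu^0_H(A) = sup_{0 <> x in H} nu(Ax)/nu(x),
   i.e. the least nonnegative upper bound of these ratios (sup of the empty
   set taken to be 0). *)
Definition is_opnorm_on (nu : 'cV[F]_n -> F) (H : 'cV[F]_n -> Prop)
    (A : 'M[F]_n) (s : F) : Prop :=
  [/\ 0 <= s,
      (forall x, H x -> x != 0 -> nu (A *m x) / nu x <= s) &
      (forall t, 0 <= t -> (forall x, H x -> x != 0 -> nu (A *m x) / nu x <= t) ->
         s <= t)].

Definition is_opnorm nu A s := is_opnorm_on nu (fun _ => True) A s.

Definition nonexpansive (nu : 'cV[F]_n -> F) (A : 'M[F]_n) : Prop :=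
  exists s, is_opnorm nu A s /\ s <= 1.

Definition paracontracting (nu : 'cV[F]_n -> F) (A : 'M[F]_n) : Prop :=
  forall x, A *m x != x -> nu (A *m x) < nu x.

Definition l_paracontracting (nu : 'cV[F]_n -> F) (A : 'M[F]_n) : Prop :=
  exists gamma : F, 0 < gamma /\
    forall x, nu (A *m x) <= nu x - gamma * nu (A *m x - x).

Definition H_contractor (nu : 'cV[F]_n -> F) (H : 'cV[F]_n -> Prop)
    (A : 'M[F]_n) : Prop :=
  [/\ nonexpansive nu A, invariant A H &
      exists s, is_opnorm_on nu H A s /\ s < 1].

Definition theorem2p7_over : Prop :=
  forall (nu : 'cV[F]_n -> F) (A : 'M[F]_n),
    is_vector_norm nu -> nonexpansive nu A ->
    let H := range_mx (1%:M - A) in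
    let K := null_mx (1%:M - A) in
    (forall y z, H y -> K z -> nu (y + z) = nu y + nu z) ->
    (l_paracontracting nu A <-> paracontracting nu A) /\
    (paracontracting nu A <-> H_contractor nu H A).

End Defs.

(* The additivity of nu across H and K forces
   H and K to meet only in 0, so every x splits as x = P x + (x - P x) with P x in H and
   x - P x in K, and nu x = nu (P x) + nu (x - P x).  Since A fixes K and maps
   H into itself, all three properties only concern A on H.  A contraction
   factor s < 1 on H gives (i) with gamma = (1 - s) / 2.  Conversely, the gap
   g x = nu x - nu (A (P x)) is positively homogeneous, 2-Lipschitz and, by
   paracontractivity, positive off 0; compactness of the unit sphere of the
   underlying real space yields g >= c nu with c > 0, hence
   nu (A y) <= nu y / (1 + c) on H. *)

From mathcomp Require Import all_boot all_order all_algebra.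
From mathcomp Require Import reals complex.
From mathcomp Require Import ring.
From mathcomp Require Import classical_sets boolp topology normedtype derive.
Set Implicit Arguments. Unset Strict Implicit. Unset Printing Implicit Defensive.
Import Order.TTheory GRing.Theory Num.Theory.
Import numFieldNormedType.Exports.
Local Open Scope classical_set_scope.
Local Open Scope ring_scope.

Lemma range_mxB (F : numFieldType) n (M : 'M[F]_n) y y' :
  range_mx M y -> range_mx M y' -> range_mx M (y - y').
Proof. by case=> [x ->] [x' ->]; exists (x - x'); rewrite mulmxBr. Qed.

Lemma range_mxZ (F : numFieldType) n (M : 'M[F]_n) a y :
  range_mx M y -> range_mx M (a *: y).
Proof. by case=> x ->; exists (a *: x); rewrite scalemxAr. Qed.

(* Subspaces in mxalgebra are row spaces, hence the transposes. *)
Lemma mulmx_sqr_range (F : fieldType) n (B : 'M[F]_n) :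
  (forall x : 'cV_n, B *m (B *m x) = 0 -> B *m x = 0) ->
  forall x : 'cV_n, exists w, B *m x = B *m (B *m w).
Proof.
move=> kerB2 x; set C := B^T.
have kerCC : (kermx (C *m C) <= kermx C)%MS.
  apply/sub_kermxP/row_matrixP => i; rewrite row_mul row0.
  apply: trmx_inj; rewrite trmx_mul trmxK trmx0; apply: kerB2.
  apply: trmx_inj; rewrite trmx0 !trmx_mul !trmxK.
  by rewrite -mulmxA -row_mul (sub_kermxP (submx_refl _)) row0.
have sCCC : (C <= C *m C)%MS.
  have := mxrankS kerCC; rewrite !mxrank_ker leq_sub2lE ?rank_leq_col // => rkC.
  by rewrite -(mxrank_leqif_sup (submxMl C C)) eqn_leq rkC mxrankM_maxr.
have [D xCE] := submxP (submx_trans (submxMl x^T C) sCCC).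
by exists D^T; apply: trmx_inj; rewrite !trmx_mul !trmxK xCE mulmxA.
Qed.

Section VectorNorm.
Variables (F : numFieldType) (n : nat) (nu : 'cV[F]_n -> F).
Hypothesis nu_norm : is_vector_norm nu.

Lemma nu_ge0 x : 0 <= nu x. Proof. by case: nu_norm. Qed.
Lemma nu_eq0 x : nu x = 0 -> x = 0. Proof. by case: nu_norm => _ + _ _; apply. Qed.
Lemma nuZ a x : nu (a *: x) = `|a| * nu x. Proof. by case: nu_norm. Qed.
Lemma nuD x y : nu (x + y) <= nu x + nu y. Proof. by case: nu_norm. Qed.

Lemma nu0 : nu 0 = 0. Proof. by rewrite -(scale0r 0) nuZ normr0 mul0r. Qed.

Lemma nuN x : nu (- x) = nu x.
Proof. by rewrite -scaleN1r nuZ normrN normr1 mul1r. Qed.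

Lemma nu_gt0 x : x != 0 -> 0 < nu x.
Proof.
by move=> x0; rewrite lt_def nu_ge0 andbT; apply: contra x0 => /eqP/nu_eq0->.
Qed.

Lemma nuB x y : nu (x - y) <= nu x + nu y.
Proof. by rewrite -(nuN y) nuD. Qed.

Lemma ler_sub_nu x y : nu x - nu y <= nu (x - y).
Proof. by rewrite lerBlDr -{1}(subrK y x) nuD. Qed.

Lemma ler_dist_nu x y : `|nu x - nu y| <= nu (x - y).
Proof.
rewrite real_ler_norml ?rpredB ?ger0_real ?nu_ge0 // ler_sub_nu andbT.
by rewrite lerNl opprB -(nuN (x - y)) opprB ler_sub_nu.
Qed.

Lemma nu_sum I (r : seq I) (G : I -> 'cV[F]_n) :
  nu (\sum_(i <- r) G i) <= \sum_(i <- r) nu (G i).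
Proof.
elim/big_rec2: _ => [|i s t _ le_st]; first by rewrite nu0.
by apply: le_trans (nuD _ _) _; rewrite lerD2l.
Qed.

Lemma opnorm_on_le H A s x :
  is_opnorm_on nu H A s -> H x -> nu (A *m x) <= s * nu x.
Proof.
case=> _ ratio_le _ Hx; have [->|x0] := eqVneq x 0; first by rewrite mulmx0 nu0 mulr0.
by rewrite -ler_pdivrMr ?nu_gt0 ?ratio_le.
Qed.

Lemma nonexpansive_le A x : nonexpansive nu A -> nu (A *m x) <= nu x.
Proof.
case=> s [/opnorm_on_le le_s s_le1]; apply: le_trans (le_s x I) _.
by rewrite ler_piMl ?nu_ge0.
Qed.

Lemma l_paracontracting_paracontracting A :
  l_paracontracting nu A -> paracontracting nu A.
Proof.
case=> gamma [gamma_gt0 le_gamma] x Ax_neq_x; apply: le_lt_trans (le_gamma x) _.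
by rewrite ltrBlDr ltrDl mulr_gt0 ?nu_gt0 ?subr_eq0.
Qed.

End VectorNorm.

Section RangeNullSplitting.
Variables (F : numFieldType) (n : nat) (nu : 'cV[F]_n -> F) (A : 'M[F]_n).
Local Notation B := (1%:M - A).

Lemma null_mx_fixed z : null_mx B z -> A *m z = z.
Proof. by rewrite /null_mx mulmxBl mul1mx => /eqP; rewrite subr_eq0 => /eqP. Qed.

Lemma range_mx_invariant y : range_mx B y -> range_mx B (A *m y).
Proof.
case=> w ->; exists (A *m w).
by rewrite !mulmxA mulmxBl mulmxBr mul1mx mulmx1.
Qed.

Hypothesis nu_norm : is_vector_norm nu.
Hypothesis nu_add :
  forall y z, range_mx B y -> null_mx B z -> nu (y + z) = nu y + nu z.

Lemma range_null_eq0 v : range_mx B v -> null_mx B v -> v = 0.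
Proof.
move=> Hv Kv; have KNv : null_mx B (- v) by rewrite /null_mx mulmxN Kv oppr0.
have /eqP := nu_add Hv KNv; rewrite subrr nu0 // nuN // eq_sym -mulr2n.
by rewrite mulrn_eq0 => /eqP/nu_eq0; apply.
Qed.

Lemma exists_range_null_split x : exists y, range_mx B y /\ null_mx B (x - y).
Proof.
have [|w Bx] := @mulmx_sqr_range _ _ B _ x.
  by move=> v BBv; apply: range_null_eq0 => //; exists v.
exists (B *m w); split; first by exists w.
by rewrite /null_mx mulmxBr Bx subrr.
Qed.

Definition proj x := projT1 (cid (exists_range_null_split x)).

Lemma proj_range x : range_mx B (proj x).
Proof. exact: proj1 (projT2 (cid (exists_range_null_split x))). Qed.

Lemma proj_null x : null_mx B (x - proj x).
Proof. exact: proj2 (projT2 (cid (exists_range_null_split x))). Qed.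

Lemma null_mxB x y : null_mx B (x - y) <-> B *m x = B *m y.
Proof.
rewrite /null_mx mulmxBr; split=> [/eqP|->]; last exact: subrr.
by rewrite subr_eq0 => /eqP.
Qed.

Lemma proj_eq x y : range_mx B y -> null_mx B (x - y) -> proj x = y.
Proof.
move=> Hy /null_mxB Bxy; apply/eqP; rewrite -subr_eq0; apply/eqP/range_null_eq0.
  exact/range_mxB/Hy/proj_range.
by apply/null_mxB; rewrite -Bxy; apply/esym/null_mxB/proj_null.
Qed.

Lemma proj_id y : range_mx B y -> proj y = y.
Proof. by move=> Hy; apply: proj_eq => //; apply/null_mxB. Qed.

Lemma projB x y : proj (x - y) = proj x - proj y.
Proof.
apply: proj_eq.
  exact/range_mxB/proj_range/proj_range.
by apply/null_mxB; rewrite !mulmxBr; congr (_ - _); apply/null_mxB/proj_null.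
Qed.

Lemma projZ a x : proj (a *: x) = a *: proj x.
Proof.
apply: proj_eq; first exact/range_mxZ/proj_range.
by rewrite /null_mx -scalerBr -scalemxAr proj_null scaler0.
Qed.

Lemma nu_proj x : nu x = nu (proj x) + nu (x - proj x).
Proof.
rewrite -nu_add; [by rewrite addrCA subrr addr0 | exact: proj_range | exact: proj_null].
Qed.

Lemma nu_proj_le x : nu (proj x) <= nu x.
Proof. by rewrite [leRHS]nu_proj lerDl nu_ge0. Qed.

Lemma mulmx_proj x : A *m x = A *m proj x + (x - proj x).
Proof.
rewrite -{1}(subrK (proj x) x) mulmxDr null_mx_fixed; [exact: addrC | exact: proj_null].
Qed.

Lemma nu_mulmx_proj x : nu (A *m x) = nu (A *m proj x) + nu (x - proj x).
Proof.
rewrite mulmx_proj nu_add //; [exact/range_mx_invariant/proj_range | exact: proj_null].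
Qed.

Lemma subr_mulmx_proj x : A *m x - x = A *m proj x - proj x.
Proof. by rewrite mulmx_proj -addrA addrAC subrr add0r. Qed.

Lemma l_paracontracting_of_range gamma : 0 < gamma ->
    (forall y, range_mx B y -> gamma * nu (A *m y - y) <= nu y - nu (A *m y)) ->
  l_paracontracting nu A.
Proof.
move=> gamma_gt0 le_gamma; exists gamma; split=> // x.
rewrite subr_mulmx_proj nu_mulmx_proj [in nu x]nu_proj addrAC lerD2r lerBrDr addrC.
by rewrite -lerBrDr le_gamma //; apply: proj_range.
Qed.

Lemma H_contractor_l_paracontracting :
  H_contractor nu (range_mx B) A -> l_paracontracting nu A.
Proof.
case=> _ _ [s [opn_s s_lt1]]; have s_ge0 : 0 <= s by case: opn_s.
apply: (@l_paracontracting_of_range ((1 - s) / 2)).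
  by rewrite divr_gt0 ?subr_gt0 ?ltr0n.
move=> y Hy; have le_s := opnorm_on_le nu_norm opn_s Hy.
have le_nuy : nu (A *m y) <= nu y.
  by apply: le_trans le_s _; rewrite ler_piMl ?nu_ge0 ?ltW.
apply: le_trans (_ : (1 - s) / 2 * (nu y *+ 2) <= _).
  rewrite ler_wpM2l ?divr_ge0 ?ler0n ?subr_ge0 ?(ltW s_lt1) // mulr2n.
  by apply: le_trans (nuB nu_norm _ _) _; rewrite lerD2r.
by rewrite mulrnAr -mulrnAl -mulr_natr divfK ?pnatr_eq0 // mulrBl mul1r lerD2l lerN2.
Qed.

Lemma paracontracting_range_lt y : paracontracting nu A ->
  range_mx B y -> y != 0 -> nu (A *m y) < nu y.
Proof.
move=> pcA Hy y0; apply: pcA; apply: contra y0 => /eqP Ay_y.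
by apply/eqP/range_null_eq0; rewrite // /null_mx mulmxBl mul1mx Ay_y subrr.
Qed.

Definition contraction_gap x := nu x - nu (A *m proj x).

Lemma contraction_gap_range y :
  range_mx B y -> contraction_gap y = nu y - nu (A *m y).
Proof. by move=> Hy; rewrite /contraction_gap proj_id. Qed.

Lemma contraction_gapZ a x :
  0 <= a -> contraction_gap (a *: x) = a * contraction_gap x.
Proof.
move=> a_ge0; rewrite /contraction_gap projZ -scalemxAr !nuZ //.
by rewrite ger0_norm // mulrBr.
Qed.

Lemma contraction_gap_lipschitz : nonexpansive nu A ->
  forall x y, `|contraction_gap x - contraction_gap y| <= 2 * nu (x - y).
Proof.
move=> neA x y; have -> : contraction_gap x - contraction_gap y =
    (nu x - nu y) + (nu (A *m proj y) - nu (A *m proj x)).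
  by rewrite /contraction_gap; ring.
apply: le_trans (ler_normD _ _) _; rewrite mulr2n mulrDl mul1r.
apply: lerD; first exact: ler_dist_nu.
rewrite distrC; apply: le_trans (ler_dist_nu nu_norm _ _) _.
rewrite -mulmxBr -projB; apply: le_trans (nonexpansive_le _ _ neA) _ => //.
exact: nu_proj_le.
Qed.

Lemma contraction_gap_gt0 : paracontracting nu A ->
  forall x, x != 0 -> 0 < contraction_gap x.
Proof.
move=> pcA x x0; rewrite /contraction_gap subr_gt0.
have [Px0|Px_neq0] := eqVneq (proj x) 0.
  by rewrite Px0 mulmx0 nu0 // nu_gt0.
apply: lt_le_trans (nu_proj_le x).
by apply: paracontracting_range_lt => //; apply: proj_range.
Qed.

End RangeNullSplitting.

Lemma lipschitz_continuous (R : realType) (V : normedModType R) (f : V -> R) k :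
  (forall u v, `|f u - f v| <= k * `|u - v|) -> continuous f.
Proof.
move=> f_lip x; apply/cvgrPdist_lt => e e_gt0.
have k1_gt0 : 0 < `|k| + 1 by rewrite ltr_wpDl.
near=> y; apply: le_lt_trans (f_lip x y) _.
apply: le_lt_trans (_ : (`|k| + 1) * `|x - y| < e); last first.
  rewrite -ltr_pdivlMl // mulrC; near: y; apply/nbhs_normP.
  by exists (e / (`|k| + 1)) => //=; rewrite divr_gt0.
by rewrite ler_wpM2r // (le_trans (ler_norm k)) // lerDl.
Unshelve. all: by end_near. Qed.

Lemma rV_homogeneous_ge_norm (R : realType) m (f : 'rV[R]_m -> R) :
    continuous f -> (forall r v, 0 <= r -> f (r *: v) = r * f v) ->
    (forall v, v != 0 -> 0 < f v) ->
  exists2 c, 0 < c & forall v, c * `|v| <= f v.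
Proof.
move=> f_cont fZ f_gt0.
have f0 : f 0 = 0 by have := fZ 0 0 (lexx 0); rewrite scale0r mul0r.
have [[w w0]|all0] := pselect (exists w : 'rV[R]_m, w != 0); last first.
  exists 1 => // v; have /eqP -> : v == 0 by apply: contra_notT all0; exists v.
  by rewrite normr0 mulr0 f0.
pose S := [set v : 'rV[R]_m | `|v| = 1].
have S_unit v : v != 0 -> S (`|v|^-1 *: v).
  by move=> v0; rewrite /S /= normrZ normfV normr_id mulVf ?normr_eq0.
have S_compact : compact S.
  apply: bounded_closed_compact.
    have S_filter : ProperFilter (globally S).
      exact: globally_properfilter (S_unit w w0).
    by apply/ex_bound; exists 1 => v /= ->.
  have := @preimage_closed _ _ (@Num.norm _ 'rV[R]_m) [set 1] _ (@closed_eq R 1).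
  by apply=> v _; apply: norm_continuous.
have [c /[1!inE] Sc c_min] :=
  EVT_min_rV (ex_intro _ _ (S_unit w w0)) S_compact (continuous_subspaceT f_cont).
exists (f c).
  by apply: f_gt0; apply: contra_eqN Sc => /eqP ->; rewrite normr0 eq_sym oner_eq0.
move=> v; have [->|v0] := eqVneq v 0; first by rewrite normr0 mulr0 f0.
have := c_min _ (mem_set (S_unit v v0)); rewrite fZ ?invr_ge0 //.
by rewrite ler_pdivlMl ?normr_gt0 // mulrC.
Qed.

Lemma ler_norm_coord (R : realType) m (v : 'rV[R]_m) j : `|v 0 j| <= `|v|.
Proof.
rewrite [leRHS]/Num.norm /= mx_normrE; apply/bigmax_geP; right => /=.
by exists (0, j).
Qed.

(* F^n is handled as the real space 'rV[R]_m through the iota-semilinear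
   bijection psi; rho inverts the embedding iota on nonnegative elements.
   This covers F = R and F = R[i] at once. *)
Section RealCoordinates.
Variables (R : realType) (F : numFieldType) (iota : {rmorphism R -> F}).
Hypothesis ler_iota : forall r s, (iota r <= iota s) = (r <= s).
Variable rho : F -> R.
Hypothesis iota_rho : forall a, 0 <= a -> iota (rho a) = a.

Lemma iota_ge0 r : (0 <= iota r) = (0 <= r).
Proof. by rewrite -(rmorph0 iota) ler_iota. Qed.

Lemma ltr_iota r s : (iota r < iota s) = (r < s).
Proof. by rewrite !lt_def ler_iota (inj_eq (fmorph_inj iota)). Qed.

Lemma normr_iota r : `|iota r| = iota `|r|.
Proof.
have [r_ge0|r_lt0] := leP 0 r; first by rewrite !ger0_norm ?iota_ge0.
by rewrite !ltr0_norm ?rmorphN // -(rmorph0 iota) ltr_iota.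
Qed.

Lemma exists_opnorm_on n (nu : 'cV[F]_n -> F) H A b :
    is_vector_norm nu -> 0 <= b ->
    (forall x, H x -> x != 0 -> nu (A *m x) / nu x <= b) ->
  exists s, is_opnorm_on nu H A s /\ s <= b.
Proof.
move=> nu_norm b_ge0 le_b.
have ratio_ge0 x : 0 <= nu (A *m x) / nu x by rewrite divr_ge0 ?nu_ge0.
pose E := [set r | r = 0 \/
  exists x, [/\ H x, x != 0 & r = rho (nu (A *m x) / nu x)]].
have E_ub t : 0 <= t -> (forall x, H x -> x != 0 -> nu (A *m x) / nu x <= t) ->
    ubound E (rho t).
  move=> t_ge0 le_t _ [->|[x [Hx x0 ->]]]; first by rewrite -ler_iota rmorph0 iota_rho.
  by rewrite -ler_iota !iota_rho ?le_t.
have E_sup : has_sup E by split; [exists 0; left | exists (rho b); apply: E_ub].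
have sup_ge0 : 0 <= sup E by apply: ub_le_sup E_sup.2 _ _; left.
have sup_le t : 0 <= t -> (forall x, H x -> x != 0 -> nu (A *m x) / nu x <= t) ->
    iota (sup E) <= t.
  move=> t_ge0 le_t; rewrite -(iota_rho t_ge0) ler_iota.
  by apply: ge_sup; [case: E_sup | apply: E_ub].
exists (iota (sup E)); split; last exact: sup_le.
split; [by rewrite iota_ge0 | | exact: sup_le].
move=> x Hx x0; rewrite -(iota_rho (ratio_ge0 x)) ler_iota.
by apply: ub_le_sup E_sup.2 _ _; right; exists x.
Qed.

Variables (m n : nat) (psi : 'rV[R]_m -> 'cV[F]_n).
Hypothesis psiD : forall u v, psi (u + v) = psi u + psi v.
Hypothesis psiZ : forall r v, psi (r *: v) = iota r *: psi v.
Hypothesis psi_inj : forall v, psi v = 0 -> v = 0.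
Hypothesis psi_surj : forall x, exists v, x = psi v.

Lemma psi0 : psi 0 = 0.
Proof. by rewrite -(scale0r 0) psiZ rmorph0 scale0r. Qed.

Lemma psiB u v : psi (u - v) = psi u - psi v.
Proof. by rewrite psiD -scaleN1r psiZ rmorphN1 scaleN1r. Qed.

Lemma nu_psi_le nu : is_vector_norm nu ->
  exists2 M, 0 < M & forall v, nu (psi v) <= iota (M * `|v|).
Proof.
move=> nu_norm; pose M := \sum_(j < m) rho (nu (psi 'e_j)).
have nu_e j : iota (rho (nu (psi 'e_j))) = nu (psi 'e_j) by rewrite iota_rho ?nu_ge0.
exists (M + 1) => [|v].
  by rewrite ltr_wpDl ?sumr_ge0 // => j _; rewrite -iota_ge0 nu_e nu_ge0.
rewrite {1}(row_sum_delta v) (big_morph psi psiD psi0).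
apply: le_trans (nu_sum nu_norm _ _) _.
apply: le_trans (_ : iota (M * `|v|) <= _); last first.
  by rewrite ler_iota ler_wpM2r // lerDl.
rewrite mulr_suml rmorph_sum; apply: ler_sum => j _.
rewrite psiZ nuZ // normr_iota rmorphM nu_e mulrC ler_wpM2l ?nu_ge0 //.
by rewrite ler_iota ler_norm_coord.
Qed.

Lemma homogeneous_ge_nu nu (G : 'cV[F]_n -> F) L :
    is_vector_norm nu -> 0 <= L ->
    (forall a x, 0 <= a -> G (a *: x) = a * G x) ->
    (forall x y, `|G x - G y| <= L * nu (x - y)) ->
    (forall x, x != 0 -> 0 < G x) ->
  exists2 c, 0 < c & forall x, c * nu x <= G x.
Proof.
move=> nu_norm L_ge0 GZ G_lip G_gt0.
have G_ge0 x : 0 <= G x.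
  have [->|x0] := eqVneq x 0; last exact/ltW/G_gt0.
  by have := GZ 0 0 (lexx 0); rewrite scale0r mul0r => ->.
have [M M_gt0 nu_psi] := nu_psi_le nu_norm.
pose f v := rho (G (psi v)).
have iota_f v : iota (f v) = G (psi v) by rewrite iota_rho.
have f_lip u v : `|f u - f v| <= rho L * M * `|u - v|.
  rewrite -ler_iota -normr_iota !rmorphM rmorphB !iota_f iota_rho // -mulrA.
  by apply: le_trans (G_lip _ _) _; rewrite -psiB ler_wpM2l // -rmorphM nu_psi.
have fZ r v : 0 <= r -> f (r *: v) = r * f v.
  move=> r_ge0; apply: (fmorph_inj iota).
  by rewrite rmorphM !iota_f psiZ GZ ?iota_ge0.
have f_gt0 v : v != 0 -> 0 < f v.
  move=> v0; rewrite -ltr_iota rmorph0 iota_f G_gt0 //.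
  by apply: contra v0 => /eqP/psi_inj ->.
have [c c_gt0 le_c] :=
  rV_homogeneous_ge_norm (lipschitz_continuous f_lip) fZ f_gt0.
exists (iota (c / M)) => [|x]; first by rewrite -(rmorph0 iota) ltr_iota divr_gt0.
have [v ->] := psi_surj x; rewrite -iota_f.
apply: le_trans (_ : iota (c / M) * iota (M * `|v|) <= _).
  by rewrite ler_wpM2l ?nu_psi // iota_ge0 divr_ge0 ?ltW.
by rewrite -rmorphM ler_iota mulrA divfK ?gt_eqF.
Qed.

Lemma paracontracting_H_contractor (nu : 'cV[F]_n -> F) (A : 'M[F]_n) :
    is_vector_norm nu ->
    (forall y z, range_mx (1%:M - A) y -> null_mx (1%:M - A) z ->
       nu (y + z) = nu y + nu z) ->
    nonexpansive nu A -> paracontracting nu A ->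
  H_contractor nu (range_mx (1%:M - A)) A.
Proof.
move=> nu_norm nu_add neA pcA.
have [c c_gt0 le_c] := homogeneous_ge_nu nu_norm (ler0n _ 2)
  (contraction_gapZ nu_norm nu_add) (contraction_gap_lipschitz nu_norm nu_add neA)
  (contraction_gap_gt0 nu_norm nu_add pcA).
have c1_gt0 : 0 < 1 + c by rewrite addr_gt0.
have ratio_le x : range_mx (1%:M - A) x -> x != 0 ->
    nu (A *m x) / nu x <= (1 + c)^-1.
  move=> Hx x0; rewrite ler_pdivrMr ?nu_gt0 // mulrC ler_pdivlMr // mulrDr mulr1.
  have := le_c x; rewrite contraction_gap_range // lerBrDr addrC.
  move=> /(le_trans _); apply.
  by rewrite lerD2l mulrC ler_wpM2l ?(ltW c_gt0) ?(nonexpansive_le nu_norm _ neA).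
have [|s [opn_s le_s]] := exists_opnorm_on nu_norm _ ratio_le.
  by rewrite invr_ge0 ltW.
split=> //; first exact: range_mx_invariant.
exists s; split=> //; apply: le_lt_trans le_s _.
by rewrite invf_lt1 // ltrDl.
Qed.

Lemma theorem2p7_over_real_coords : theorem2p7_over F n.
Proof.
move=> nu A nu_norm neA /= nu_add.
have i_ii := @l_paracontracting_paracontracting _ _ _ nu_norm A.
have ii_iii := paracontracting_H_contractor nu_norm nu_add neA.
have iii_i := H_contractor_l_paracontracting nu_norm nu_add.
by split; split; [exact: i_ii | move/ii_iii/iii_i | exact: ii_iii | move/iii_i/i_ii].
Qed.

End RealCoordinates.

Lemma theorem2p7_real (R : realType) n : theorem2p7_over R n.
Proof.
apply: (@theorem2p7_over_real_coords R R idfun _ id _ n n trmx) => //.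
- by move=> u v; rewrite linearD.
- by move=> r v; rewrite linearZ.
- by move=> v /eqP; rewrite -trmx0 (inj_eq trmx_inj) => /eqP.
- by move=> x; exists x^T; rewrite trmxK.
Qed.

Section ComplexCoordinates.
Local Open Scope complex_scope.
Variables (R : realType) (n : nat).

Definition cV_of_re_im (v : 'rV[R]_(n + n)) : 'cV[R[i]]_n :=
  \col_i (v 0 (lshift n i) +i* v 0 (rshift n i)).

Lemma theorem2p7_complex : theorem2p7_over R[i] n.
Proof.
apply: (@theorem2p7_over_real_coords R R[i] (real_complex R) _ (@complex.Re R) _
  (n + n) n cV_of_re_im).
- exact: lecR.
- by case=> a b /ger0_Im /= ->.
- by move=> u v; apply/matrixP => i j; rewrite !mxE.
- by move=> r v; apply/matrixP => i j; rewrite !mxE; simpc.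
- move=> v /matrixP v0; apply/rowP => j; rewrite -(splitK j).
  by case: (split j) => k; have := v0 k 0; rewrite !mxE; case.
- move=> x; exists (row_mx (\row_i complex.Re (x i 0)) (\row_i complex.Im (x i 0))).
  apply/matrixP => i j; rewrite mxE row_mxEl row_mxEr !mxE ord1.
  by case: (x i 0).
Qed.

End ComplexCoordinates.

Theorem theorem2p7 (R : realType) (n : nat) :
  theorem2p7_over R n /\ theorem2p7_over R[i] n.
Proof. by split; [apply: theorem2p7_real | apply: theorem2p7_complex]. Qed.
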